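(* Every Ferrers-convex matrix is convex and has unimodal row and column sum vectors.
   Context: A $(0,1)$-matrix is convex if the 1's occur consecutively in every row and in every column. A Ferrers array is a left-justified array of positions where the numbers of positions in the rows form a nonincreasing vector; a Ferrers matrix is a $(0,1)$-matrix the positions of whose 1's form a Ferrers array. Let $m_1,m_2,n_1,n_2$ be positive integers. A Ferrers-convex matrix is a matrix $A=\begin{bmatrix} A_{11} & A_{12}\\ A_{21} & A_{22}\end{bmatrix}$, where $A_{22}$, $A_{12}$, $A_{21}$, $A_{11}$ are matrices obtained by rotating some (possibly different) Ferrers matrices by $0$, $90$, $180$ and $270$ degrees counterclockwise, respectively, with $A_{11}$ of size $m_1\times n_1$ and $A_{22}$ of size $m_2\times n_2$ (which determines the sizes of $A_{12}$ and $A_{21}$). A vector is unimodal if its components are first nondecreasing and then nonincreasing. *)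

From mathcomp Require Import all_boot all_order all_algebra.
Set Implicit Arguments. Unset Strict Implicit. Unset Printing Implicit Defensive.

Definition is01 (m n : nat) (A : 'M[nat]_(m, n)) : Prop :=
  forall i j, A i j = 0 \/ A i j = 1.

Definition convex_mx (m n : nat) (A : 'M[nat]_(m, n)) : Prop :=
  is01 A /\
  (forall (i : 'I_m) (j1 j2 j : 'I_n),
      j1 <= j -> j <= j2 -> A i j1 = 1 -> A i j2 = 1 -> A i j = 1) /\
  (forall (j : 'I_n) (i1 i2 i : 'I_m),
      i1 <= i -> i <= i2 -> A i1 j = 1 -> A i2 j = 1 -> A i j = 1).

Definition ferrers_mx (m n : nat) (A : 'M[nat]_(m, n)) : Prop :=
  exists r : 'I_m -> nat,
    (forall i, r i <= n) /\
    (forall i1 i2 : 'I_m, i1 <= i2 -> r i2 <= r i1) /\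
    (forall i j, A i j = nat_of_bool (j < r i)).

(* Counterclockwise rotations of an m x n matrix by 90, 180, 270 degrees. *)
Definition rot90 (m n : nat) (B : 'M[nat]_(m, n)) : 'M[nat]_(n, m) :=
  \matrix_(i < n, j < m) B j (rev_ord i).
Definition rot180 (m n : nat) (B : 'M[nat]_(m, n)) : 'M[nat]_(m, n) :=
  \matrix_(i < m, j < n) B (rev_ord i) (rev_ord j).
Definition rot270 (m n : nat) (B : 'M[nat]_(m, n)) : 'M[nat]_(n, m) :=
  \matrix_(i < n, j < m) B (rev_ord j) i.

Definition ferrers_convex (m1 m2 n1 n2 : nat)
    (A : 'M[nat]_(m1 + m2, n1 + n2)) : Prop :=
  exists (F11 : 'M[nat]_(m1, n1)) (F12 : 'M[nat]_(n2, m1))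
         (F21 : 'M[nat]_(n1, m2)) (F22 : 'M[nat]_(m2, n2)),
    [/\ ferrers_mx F11, ferrers_mx F12, ferrers_mx F21, ferrers_mx F22
      & A = block_mx (rot180 F11) (rot90 F12) (rot270 F21) F22].

Definition unimodal (k : nat) (v : 'I_k -> nat) : Prop :=
  exists p : nat,
    (forall i j : 'I_k, i <= j -> j <= p -> v i <= v j) /\
    (forall i j : 'I_k, p <= i -> i <= j -> v j <= v i).

Definition row_sums (m n : nat) (A : 'M[nat]_(m, n)) : 'I_m -> nat :=
  fun i => \sum_(j < n) A i j.
Definition col_sums (m n : nat) (A : 'M[nat]_(m, n)) : 'I_n -> nat :=
  fun j => \sum_(i < m) A i j.

From mathcomp Require Import all_boot all_order all_algebra.
Set Implicit Arguments. Unset Strict Implicit. Unset Printing Implicit Defensive.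

(* Each block of a Ferrers-convex matrix is monotone in both indices, with the
   directions arranged so that every column of A rises over the first m1 rows
   and falls over the last m2, and every row rises over the first n1 columns
   and falls over the last n2.  A 0/1 vector of this shape has consecutive
   ones, and since all columns turn at the same place, so does their sum, the
   row-sum vector; symmetrically for the column sums. *)

Lemma leq_rev_ord n (i j : 'I_n) : i <= j -> rev_ord j <= rev_ord i.
Proof. by move=> le_ij; rewrite /= leq_sub2l. Qed.

Lemma ferrers_mx01 m n (F : 'M[nat]_(m, n)) : ferrers_mx F -> is01 F.
Proof. by case=> r [_ [_ eF]] i j; rewrite eF; case: (j < r i); [right | left]. Qed.

Lemma ferrers_mx_le m n (F : 'M[nat]_(m, n)) (i1 i2 : 'I_m) (j1 j2 : 'I_n) :
  ferrers_mx F -> i1 <= i2 -> j1 <= j2 -> F i2 j2 <= F i1 j1.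
Proof.
case=> r [_ [r_decr eF]] le_i le_j; rewrite !eF.
case: ltnP => //= lt_j2.
by rewrite (leq_ltn_trans le_j (leq_trans lt_j2 (r_decr _ _ le_i))).
Qed.

Section FerrersRotations.

Variables (m n : nat) (F : 'M[nat]_(m, n)).
Hypothesis ferrersF : ferrers_mx F.

Lemma rot180_ferrers_le (i1 i2 : 'I_m) (j1 j2 : 'I_n) :
  i1 <= i2 -> j1 <= j2 -> rot180 F i1 j1 <= rot180 F i2 j2.
Proof. by move=> le_i le_j; rewrite !mxE ferrers_mx_le ?leq_rev_ord. Qed.

Lemma rot90_ferrers_le (i1 i2 : 'I_n) (j1 j2 : 'I_m) :
  i1 <= i2 -> j1 <= j2 -> rot90 F i1 j2 <= rot90 F i2 j1.
Proof. by move=> le_i le_j; rewrite !mxE ferrers_mx_le ?leq_rev_ord. Qed.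

Lemma rot270_ferrers_le (i1 i2 : 'I_n) (j1 j2 : 'I_m) :
  i1 <= i2 -> j1 <= j2 -> rot270 F i2 j1 <= rot270 F i1 j2.
Proof. by move=> le_i le_j; rewrite !mxE ferrers_mx_le ?leq_rev_ord. Qed.

End FerrersRotations.

Definition up_down (a b : nat) (v : 'I_(a + b) -> nat) : Prop :=
  {homo v \o lshift b : i j / i <= j} /\
  {homo v \o @rshift a b : i j / i <= j >-> j <= i}.

Lemma up_down_sum (a b : nat) (I : finType) (F : I -> 'I_(a + b) -> nat) :
  (forall k, up_down (F k)) -> up_down (fun i => \sum_(k : I) F k i).
Proof.
move=> F_up_down; split=> i j le_ij /=; apply: leq_sum => k _.
- exact: (F_up_down k).1.
- exact: (F_up_down k).2.
Qed.

Lemma up_down_unimodal (a b : nat) (v : 'I_(a + b) -> nat) :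
  up_down v -> unimodal v.
Proof.
case=> up down.
have {}up (i j : 'I_(a + b)) : i <= j -> j < a -> v i <= v j.
  move=> le_ij lt_ja; have lt_ia := leq_ltn_trans le_ij lt_ja.
  have -> : i = lshift b (Ordinal lt_ia) by exact: val_inj.
  have -> : j = lshift b (Ordinal lt_ja) by exact: val_inj.
  exact: up.
have {}down (i j : 'I_(a + b)) : a <= i -> i <= j -> v j <= v i.
  move=> le_ai le_ij.
  have i_b : i - a < b by rewrite ltn_subLR // (ltn_ord i).
  have j_b : j - a < b by rewrite ltn_subLR ?(leq_trans le_ai le_ij) // (ltn_ord j).
  have -> : i = rshift a (Ordinal i_b) by apply: val_inj; rewrite /= subnKC.
  have -> : j = rshift a (Ordinal j_b).
    by apply: val_inj; rewrite /= subnKC // (leq_trans le_ai le_ij).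
  by apply: down; rewrite /= leq_sub2r.
have [i0 _ | empty] := pickP (@predT 'I_(a + b)); last first.
  by exists 0; split=> i; have := empty i.
(* Any maximiser of v can serve as the peak. *)
pose p := [arg max_(i > i0) v i].
have v_le_p i : v i <= v p by rewrite /p; case: arg_maxnP => // k _; apply.
exists p; split=> i j.
- move=> le_ij le_jp; case: (ltnP j a) => [|le_aj]; first exact: up.
  exact: leq_trans (v_le_p i) (down _ _ le_aj le_jp).
- move=> le_pi le_ij; case: (leqP a i) => [le_ai|lt_ia]; first exact: down.
  exact: leq_trans (v_le_p j) (up _ _ le_pi lt_ia).
Qed.

Lemma unimodal_quasiconcave k (v : 'I_k -> nat) (i1 i2 i : 'I_k) :
  unimodal v -> i1 <= i -> i <= i2 -> minn (v i1) (v i2) <= v i.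
Proof.
case=> p [up down] le_1 le_2; case: (leqP i p) => [le_ip | lt_pi].
- exact: leq_trans (geq_minl _ _) (up _ _ le_1 le_ip).
- exact: leq_trans (geq_minr _ _) (down _ _ (ltnW lt_pi) le_2).
Qed.

Lemma unimodal01_convex k (v : 'I_k -> nat) :
  (forall i, v i = 0 \/ v i = 1) -> unimodal v ->
  forall i1 i2 i : 'I_k, i1 <= i -> i <= i2 -> v i1 = 1 -> v i2 = 1 -> v i = 1.
Proof.
move=> v01 uni_v i1 i2 i le_1 le_2 v1 v2.
have := unimodal_quasiconcave uni_v le_1 le_2; rewrite v1 v2.
by case: (v01 i) => ->.
Qed.

Section BlockMatrix.

Variables (m1 m2 n1 n2 : nat) (Aul : 'M[nat]_(m1, n1)) (Aur : 'M[nat]_(m1, n2)).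
Variables (Adl : 'M[nat]_(m2, n1)) (Adr : 'M[nat]_(m2, n2)).

Lemma block_mx_col_up_down :
  (forall j, {homo (fun i => Aul i j) : i1 i2 / i1 <= i2}) ->
  (forall j, {homo (fun i => Aur i j) : i1 i2 / i1 <= i2}) ->
  (forall j, {homo (fun i => Adl i j) : i1 i2 / i1 <= i2 >-> i2 <= i1}) ->
  (forall j, {homo (fun i => Adr i j) : i1 i2 / i1 <= i2 >-> i2 <= i1}) ->
  forall j, up_down (fun i => block_mx Aul Aur Adl Adr i j).
Proof.
move=> ul ur dl dr j; case: (split_ordP j) => k ->; split=> i1 i2 le_i /=.
- by rewrite !block_mxEul; apply: ul.
- by rewrite !block_mxEdl; apply: dl.
- by rewrite !block_mxEur; apply: ur.
- by rewrite !block_mxEdr; apply: dr.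
Qed.

Lemma block_mx_row_up_down :
  (forall i, {homo Aul i : j1 j2 / j1 <= j2}) ->
  (forall i, {homo Aur i : j1 j2 / j1 <= j2 >-> j2 <= j1}) ->
  (forall i, {homo Adl i : j1 j2 / j1 <= j2}) ->
  (forall i, {homo Adr i : j1 j2 / j1 <= j2 >-> j2 <= j1}) ->
  forall i, up_down (block_mx Aul Aur Adl Adr i).
Proof.
move=> ul ur dl dr i; case: (split_ordP i) => k ->; split=> j1 j2 le_j /=.
- by rewrite !block_mxEul; apply: ul.
- by rewrite !block_mxEur; apply: ur.
- by rewrite !block_mxEdl; apply: dl.
- by rewrite !block_mxEdr; apply: dr.
Qed.

End BlockMatrix.

Section FerrersConvex.

Variables (m1 m2 n1 n2 : nat) (F11 : 'M[nat]_(m1, n1)) (F12 : 'M[nat]_(n2, m1)).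
Variables (F21 : 'M[nat]_(n1, m2)) (F22 : 'M[nat]_(m2, n2)).
Hypotheses (f11 : ferrers_mx F11) (f12 : ferrers_mx F12).
Hypotheses (f21 : ferrers_mx F21) (f22 : ferrers_mx F22).

Local Notation A := (block_mx (rot180 F11) (rot90 F12) (rot270 F21) F22).

Lemma ferrers_convex01 : is01 A.
Proof.
move=> i j; case: (split_ordP i) => k ->; case: (split_ordP j) => l ->.
- by rewrite block_mxEul mxE; apply: ferrers_mx01.
- by rewrite block_mxEur mxE; apply: ferrers_mx01.
- by rewrite block_mxEdl mxE; apply: ferrers_mx01.
- by rewrite block_mxEdr; apply: ferrers_mx01.
Qed.

Lemma ferrers_convex_col_up_down j : up_down (fun i => A i j).
Proof.
apply: block_mx_col_up_down => {}j i1 i2 le_i /=.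
- exact: rot180_ferrers_le.
- exact: rot90_ferrers_le.
- exact: rot270_ferrers_le.
- exact: ferrers_mx_le.
Qed.

Lemma ferrers_convex_row_up_down i : up_down (A i).
Proof.
apply: block_mx_row_up_down => {}i j1 j2 le_j /=.
- exact: rot180_ferrers_le.
- exact: rot90_ferrers_le.
- exact: rot270_ferrers_le.
- exact: ferrers_mx_le.
Qed.

End FerrersConvex.

Theorem mainTheorem7 (m1 m2 n1 n2 : nat)
    (hm1 : 0 < m1) (hm2 : 0 < m2) (hn1 : 0 < n1) (hn2 : 0 < n2)
    (A : 'M[nat]_(m1 + m2, n1 + n2)) :
  ferrers_convex A ->
  convex_mx A /\ unimodal (row_sums A) /\ unimodal (col_sums A).
Proof.
case=> F11 [F12 [F21 [F22 [f11 f12 f21 f22 ->]]]].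
have A01 := ferrers_convex01 f11 f12 f21 f22.
have cols := ferrers_convex_col_up_down f11 f12 f21 f22.
have rows := ferrers_convex_row_up_down f11 f12 f21 f22.
split; [split; [exact: A01 | split] | split].
- move=> i; apply: unimodal01_convex (up_down_unimodal (rows i)) => j.
  exact: A01.
- move=> j; apply: unimodal01_convex (up_down_unimodal (cols j)) => i.
  exact: A01.
- exact/up_down_unimodal/up_down_sum.
- exact/up_down_unimodal/up_down_sum.
Qed.
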